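(* Let $F$ be a finite field of odd characteristic in which $-1$ is not a square, fix $C_0\ge1$, and let $A\subseteq F^2$ be $k$-regular (with constant $C_0$). Then $$\mathcal{R}(A)\lesssim |A|^2\,k,$$ with implied constant depending only on $C_0$.
   Context: For $x\cdot y=x_1y_1+x_2y_2$ on $F^2$: $(x_0,x_1,x_2)\in(F^2)^3$ is a corner if $(x_1-x_0)\cdot(x_2-x_1)=0$; $(x_0,x_1,x_2,x_3)\in(F^2)^4$ is a rectangle if $(x_i,x_{i+1},x_{i+2})$ is a corner for each $i\in\{0,1,2,3\}$, indices mod 4; $\mathcal{R}(A)$ is the number of rectangles in $A^4$. A line in $F^2$ is $\{p+tv:t\in F\}$ with $v\ne0$. $A$ is $k$-regular (with constant $C_0$) if $k\le C_0|A|^{1/2}$ and there exist a set $L$ of lines with $k/C_0\le|L|\le C_0k$ and a partition $A=\bigsqcup_{\ell\in L}A_\ell$ with $A_\ell\subseteq\ell$ and $|A|/(C_0k)\le|A_\ell|\le C_0|A|/k$ for each $\ell\in L$. *)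

From HB Require Import structures.
From mathcomp Require Import all_boot all_order all_algebra.
From mathcomp Require Import reals.
Set Implicit Arguments. Unset Strict Implicit. Unset Printing Implicit Defensive.
Import Order.TTheory GRing.Theory Num.Theory.
Local Open Scope ring_scope.

Section Defs.
Variable F : finFieldType.

Definition pt := (F * F)%type.

Definition padd (x y : pt) : pt := (x.1 + y.1, x.2 + y.2).
Definition psub (x y : pt) : pt := (x.1 - y.1, x.2 - y.2).
Definition pscale (t : F) (v : pt) : pt := (t * v.1, t * v.2).

Definition dot (x y : pt) : F := x.1 * y.1 + x.2 * y.2.

Definition corner (x0 x1 x2 : pt) : bool := dot (psub x1 x0) (psub x2 x1) == 0.

Definition rectangle (x0 x1 x2 x3 : pt) : bool :=
  [&& corner x0 x1 x2, corner x1 x2 x3, corner x2 x3 x0 & corner x3 x0 x1].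

Definition nrect (A : {set pt}) : nat :=
  #|[set q : pt * pt * pt * pt |
      [&& q.1.1.1 \in A, q.1.1.2 \in A, q.1.2 \in A, q.2 \in A &
          rectangle q.1.1.1 q.1.1.2 q.1.2 q.2]]|.

Definition is_line (l : {set pt}) : Prop :=
  exists (p v : pt), v != (0, 0) /\ l = [set padd p (pscale t v) | t : F].

Definition k_regular (R : realType) (C0 : R) (A : {set pt}) (k : R) : Prop :=
  k <= C0 * Num.sqrt (#|A|%:R) /\
  exists (L : {set {set pt}}) (Al : {set pt} -> {set pt}),
    [/\ (forall l, l \in L -> is_line l),
        k / C0 <= #|L|%:R /\ #|L|%:R <= C0 * k,
        A = \bigcup_(l in L) Al l,
        (forall l1 l2, l1 \in L -> l2 \in L -> l1 != l2 -> [disjoint Al l1 & Al l2]) &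
        (forall l, l \in L ->
           [/\ Al l \subset l,
               #|A|%:R / (C0 * k) <= #|Al l|%:R &
               #|Al l|%:R <= C0 * #|A|%:R / k])].
End Defs.

From HB Require Import structures.
From mathcomp Require Import all_boot all_order all_algebra.
From mathcomp Require Import reals ring lra zify unstable.
Import Order.TTheory GRing.Theory Num.Theory.
Set Implicit Arguments. Unset Strict Implicit. Unset Printing Implicit Defensive.
Local Open Scope ring_scope.

(** Since -1 is not a square, the form x.x is anisotropic: x.x = 0 forces
   x = 0. Hence a rectangle with x0 = x1 or x1 = x2 collapses to a pair of
   points, and otherwise x3 = x0 + x2 - x1 is determined by the corner
   (x0, x1, x2); so R(A) <= 2|A|^2 + #corners. For fixed x0 <> x1, the points z
   with (x1 - x0).(z - x1) = 0 form a line, which meets another line in at most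
   one point unless the two lines coincide; for fixed x0 and a given line this
   coincidence happens for at most one x1. So corners ending in a piece A_l
   number at most |A|^2 + |A||A_l| <= 2|A|^2, and R(A) <= 4|L||A|^2 <= 4 C0 k |A|^2. *)

Section PlaneGeometry.
Variable F : finFieldType.
Implicit Types (a b p u v z : pt F) (A B : {set pt F}).

Definition cross a b : F := a.1 * b.2 - a.2 * b.1.

Definition line p v : {set pt F} := [set padd p (pscale t v) | t : F].

Lemma dotC a b : dot a b = dot b a.
Proof. by rewrite /dot mulrC [a.2 * _]mulrC. Qed.

Lemma psub_eq0 a b : psub a b = (0, 0) -> a = b.
Proof.
case: a b => a1 a2 [b1 b2] [/eqP]; rewrite subr_eq0 => /eqP -> /eqP.
by rewrite subr_eq0 => /eqP ->.
Qed.

Lemma psub_neq0 a b : a != b -> psub a b != (0, 0).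
Proof. by apply: contraNneq => /psub_eq0 ->. Qed.

Lemma cross_eq0_of_orthogonal u a b :
  u != (0, 0) -> dot a u = 0 -> dot b u = 0 -> cross a b = 0.
Proof.
case: u a b => u1 u2 [a1 a2] [b1 b2]; rewrite /dot /cross /= => u_neq0 au bu.
have E1 : u1 * (a1 * b2 - a2 * b1) = b2 * (a1 * u1 + a2 * u2) - a2 * (b1 * u1 + b2 * u2)
  by ring.
have E2 : u2 * (a1 * b2 - a2 * b1) = a1 * (b1 * u1 + b2 * u2) - b1 * (a1 * u1 + a2 * u2)
  by ring.
rewrite au bu !mulr0 subr0 in E1 E2.
have [u1_eq0|u1_neq0] := eqVneq u1 0; last first.
  by move/eqP: E1; rewrite mulf_eq0 (negPf u1_neq0) => /eqP.
have [u2_eq0|u2_neq0] := eqVneq u2 0; first by move: u_neq0; rewrite u1_eq0 u2_eq0 eqxx.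
by move/eqP: E2; rewrite mulf_eq0 (negPf u2_neq0) => /eqP.
Qed.

(* The line p + F v is the perpendicular to x1 - x0 through x1: the only line
   that can contain two points z with (x0, x1, z) a corner. *)
Definition line_perp_at p v x0 x1 : bool :=
  (dot v (psub x1 x0) == 0) && (dot (psub p x1) (psub x1 x0) == 0).

Lemma corner_on_line_uniq p v x0 x1 z z' :
  ~~ line_perp_at p v x0 x1 -> z \in line p v -> z' \in line p v ->
  corner x0 x1 z -> corner x0 x1 z' -> z = z'.
Proof.
move=> not_perp /imsetP [t _ ->] /imsetP [t' _ ->].
have dot_line s : dot (psub x1 x0) (psub (padd p (pscale s v)) x1) =
    dot (psub p x1) (psub x1 x0) + s * dot v (psub x1 x0).
  by rewrite /dot /psub /padd /pscale /=; ring.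
rewrite /corner !dot_line => /eqP ct /eqP ct'.
have [v_perp|v_not_perp] := eqVneq (dot v (psub x1 x0)) 0.
  by move: not_perp ct; rewrite /line_perp_at v_perp eqxx mulr0 addr0 => /= /eqP.
congr padd; congr pscale; apply: (mulIf v_not_perp).
by apply: (addrI (dot (psub p x1) (psub x1 x0))); rewrite ct ct'.
Qed.

Definition corners_into A B : {set pt F * pt F * pt F} :=
  [set t | [&& t.1.1 \in A, t.1.2 \in A, t.1.1 != t.1.2, t.2 \in B &
             corner t.1.1 t.1.2 t.2]].

Lemma corners_into_bigcup A (L : {set {set pt F}}) (Al : {set pt F} -> {set pt F}) :
  corners_into A (\bigcup_(l in L) Al l) = \bigcup_(l in L) corners_into A (Al l).
Proof.
apply/setP => t; rewrite inE; apply/and5P/bigcupP.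
  by case=> x0A x1A ne /bigcupP [l lL zl] c; exists l; rewrite // inE x0A x1A ne zl.
by case=> l lL; rewrite inE => /and5P [x0A x1A ne zl c]; split=> //; apply/bigcupP; exists l.
Qed.

Section Anisotropic.
Hypothesis sqr_neq_m1 : forall x : F, x * x != -1.

Lemma add_sqr_eq0 (a b : F) : a * a + b * b = 0 -> a = 0 /\ b = 0.
Proof.
move=> sum_eq0; have [b_eq0|b_neq0] := eqVneq b 0.
  by move/eqP: sum_eq0; rewrite b_eq0 mulr0 addr0 mulf_eq0 orbb => /eqP.
have : a / b * (a / b) = -1.
  apply/eqP; rewrite -subr_eq0 opprK.
  have -> : a / b * (a / b) + 1 = (a * a + b * b) / (b * b) by field.
  by rewrite sum_eq0 mul0r.
by move/eqP; rewrite (negPf (sqr_neq_m1 _)).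
Qed.

Lemma dot_self_eq0 a : dot a a = 0 -> a = (0, 0).
Proof. by case: a => a1 a2 /add_sqr_eq0 [/= -> ->]. Qed.

Lemma eq0_of_dot_cross_eq0 a b :
  b != (0, 0) -> dot a b = 0 -> cross a b = 0 -> a = (0, 0).
Proof.
move=> b_neq0 ab_dot ab_cross; apply: dot_self_eq0; apply/eqP.
have Lagrange : dot a a * dot b b = dot a b * dot a b + cross a b * cross a b
  by rewrite /dot /cross; ring.
rewrite ab_dot ab_cross mulr0 addr0 in Lagrange.
move/eqP: Lagrange; rewrite mulf_eq0 => /orP [//|/eqP /dot_self_eq0 b_eq0].
by rewrite b_eq0 eqxx in b_neq0.
Qed.

Lemma rectangle_eq01 (x0 x2 x3 : pt F) : rectangle x0 x0 x2 x3 -> x2 = x3.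
Proof.
case/and4P => _ /eqP c1 /eqP c2 _; apply/esym/psub_eq0/dot_self_eq0.
have -> : dot (psub x3 x2) (psub x3 x2) =
    - (dot (psub x2 x0) (psub x3 x2) + dot (psub x3 x2) (psub x0 x3))
  by rewrite /dot /psub /=; ring.
by rewrite c1 c2 addr0 oppr0.
Qed.

Lemma rectangle_eq12 (x0 x1 x3 : pt F) : rectangle x0 x1 x1 x3 -> x3 = x0.
Proof.
case/and4P => _ _ /eqP c2 /eqP c3; apply/psub_eq0/dot_self_eq0.
have -> : dot (psub x3 x0) (psub x3 x0) =
    - (dot (psub x3 x1) (psub x0 x3) + dot (psub x0 x3) (psub x1 x0))
  by rewrite /dot /psub /=; ring.
by rewrite c2 c3 addr0 oppr0.
Qed.

Lemma rectangle_parallelogram (x0 x1 x2 x3 : pt F) :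
  x0 != x1 -> x1 != x2 -> rectangle x0 x1 x2 x3 -> x3 = padd x0 (psub x2 x1).
Proof.
move=> ne01 ne12 /and4P [/eqP c0 /eqP c1 _ /eqP c3].
set d := psub x3 (padd x0 (psub x2 x1)).
have d_perp12 : dot d (psub x2 x1) = 0.
  have -> : dot d (psub x2 x1) =
      dot (psub x2 x1) (psub x3 x2) + dot (psub x1 x0) (psub x2 x1)
    by rewrite /d /dot /psub /padd /=; ring.
  by rewrite c1 c0 addr0.
have d_perp01 : dot d (psub x1 x0) = 0.
  have -> : dot d (psub x1 x0) =
      - dot (psub x0 x3) (psub x1 x0) - dot (psub x1 x0) (psub x2 x1)
    by rewrite /d /dot /psub /padd /=; ring.
  by rewrite c3 c0 oppr0 addr0.
rewrite eq_sym in ne01; rewrite eq_sym in ne12.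
apply: psub_eq0; apply: (eq0_of_dot_cross_eq0 (psub_neq0 ne12) d_perp12).
by apply: (cross_eq0_of_orthogonal (psub_neq0 ne01)); rewrite // dotC.
Qed.

Lemma nrect_le_corners A : (nrect A <= 2 * #|A| ^ 2 + #|corners_into A A|)%N.
Proof.
pose diag01 (q : pt F * pt F) := (q.1, q.1, q.2, q.2).
pose diag12 (q : pt F * pt F) := (q.1, q.2, q.2, q.1).
pose complete (t : pt F * pt F * pt F) := (t.1.1, t.1.2, t.2, padd t.1.1 (psub t.2 t.1.2)).
have covered : [set q | [&& q.1.1.1 \in A, q.1.1.2 \in A, q.1.2 \in A, q.2 \in A &
      rectangle q.1.1.1 q.1.1.2 q.1.2 q.2]]
    \subset diag01 @: setX A A :|: diag12 @: setX A A :|: complete @: corners_into A A.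
  apply/subsetP => [[[[x0 x1] x2] x3]]; rewrite inE /= => /and5P [x0A x1A x2A x3A rect].
  have [e01|ne01] := eqVneq x0 x1.
    rewrite -e01 in rect *; rewrite -(rectangle_eq01 rect).
    apply/setUP; left; apply/setUP; left; apply/imsetP; exists (x0, x2) => //.
    by rewrite inE x0A x2A.
  have [e12|ne12] := eqVneq x1 x2.
    rewrite -e12 in rect *; rewrite (rectangle_eq12 rect).
    apply/setUP; left; apply/setUP; right; apply/imsetP; exists (x0, x1) => //.
    by rewrite inE x0A x1A.
  rewrite (rectangle_parallelogram ne01 ne12 rect).
  apply/setUP; right; apply/imsetP; exists (x0, x1, x2) => //.
  by rewrite inE /= x0A x1A x2A ne01; case/and4P: rect.
rewrite /nrect (leq_trans (subset_leq_card covered)) //.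
rewrite (leq_trans (leq_card_setU _ _)) // leq_add ?leq_imset_card //.
rewrite (leq_trans (leq_card_setU _ _)) // mul2n -addnn.
by rewrite leq_add // (leq_trans (leq_imset_card _ _)) // cardsX mulnn.
Qed.

Lemma line_perp_at_inj p v x0 x1 x1' : v != (0, 0) -> x0 != x1 -> x0 != x1' ->
  line_perp_at p v x0 x1 -> line_perp_at p v x0 x1' -> x1 = x1'.
Proof.
rewrite !(eq_sym x0) => v_neq0 ne1 ne1' /andP [/eqP v_perp1 /eqP p_perp1].
case/andP=> /eqP v_perp1' /eqP p_perp1'.
have cross1 := cross_eq0_of_orthogonal (psub_neq0 ne1) p_perp1 v_perp1.
have cross1' := cross_eq0_of_orthogonal (psub_neq0 ne1') p_perp1' v_perp1'.
apply/esym/psub_eq0/(eq0_of_dot_cross_eq0 v_neq0).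
  have -> : dot (psub x1' x1) v = dot v (psub x1' x0) - dot v (psub x1 x0)
    by rewrite /dot /psub /=; ring.
  by rewrite v_perp1 v_perp1' subrr.
have -> : cross (psub x1' x1) v = cross (psub p x1) v - cross (psub p x1') v
  by rewrite /cross /psub /=; ring.
by rewrite cross1 cross1' subrr.
Qed.

Lemma card_corners_into_line A B p v : v != (0, 0) -> B \subset line p v ->
  (#|corners_into A B| <= #|A| ^ 2 + #|A| * #|B|)%N.
Proof.
move=> v_neq0 B_on_line.
set S := corners_into A B.
pose P := [set t : pt F * pt F * pt F | line_perp_at p v t.1.1 t.1.2].
rewrite -(cardsID P S) addnC; apply: leq_add.
  have fst_inj : {in S :\: P &, injective fst}.
    move=> [[x0 x1] z] [[y0 y1] z']; rewrite !inE /=.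
    case/andP=> not_perp /and5P [_ _ _ zB c] /andP [_ /and5P [_ _ _ z'B c']] /= [E0 E1].
    rewrite -E0 -E1 in c' *; congr pair.
    by apply: (corner_on_line_uniq not_perp _ _ c c'); apply: (subsetP B_on_line).
  rewrite -(card_in_imset fst_inj) -mulnn -cardsX subset_leq_card //.
  apply/subsetP => _ /imsetP [[[x0 x1] z] + ->]; rewrite !inE /=.
  by case/andP=> _ /and5P [-> -> _ _ _].
pose drop_mid (t : pt F * pt F * pt F) := (t.1.1, t.2).
have drop_mid_inj : {in S :&: P &, injective drop_mid}.
  move=> [[x0 x1] z] [[y0 y1] z']; rewrite !inE /=.
  case/andP=> /and5P [_ _ ne1 _ _] perp /andP [/and5P [_ _ ne1' _ _] perp'] [E0 Ez].
  by rewrite -E0 in ne1' perp' *; rewrite -Ez (line_perp_at_inj v_neq0 ne1 ne1' perp perp').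
rewrite -(card_in_imset drop_mid_inj) -cardsX subset_leq_card //.
apply/subsetP => _ /imsetP [[[x0 x1] z] + ->]; rewrite !inE /=.
by case/andP=> /and5P [-> _ _ -> _].
Qed.

Lemma card_corners_into_lines A (L : {set {set pt F}}) (Al : {set pt F} -> {set pt F}) :
  (forall l, l \in L -> is_line l) -> (forall l, l \in L -> Al l \subset l) ->
  (forall l, l \in L -> Al l \subset A) ->
  (#|corners_into A (\bigcup_(l in L) Al l)| <= #|L| * (2 * #|A| ^ 2))%N.
Proof.
move=> lines Al_on_line Al_sub.
rewrite corners_into_bigcup (leq_trans (card_big_setU _ _ _)) // -sum_nat_const.
apply: leq_sum => l lL; have [p [v [v_neq0 l_eq]]] := lines l lL.
have on_line : Al l \subset line p v by rewrite /line -l_eq; apply: Al_on_line.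
apply: leq_trans (card_corners_into_line A v_neq0 on_line) _.
by rewrite mul2n -addnn leq_add2l -mulnn leq_mul2l subset_leq_card ?Al_sub ?orbT.
Qed.

Lemma nrect_le_lines A (L : {set {set pt F}}) (Al : {set pt F} -> {set pt F}) :
  (forall l, l \in L -> is_line l) -> A = \bigcup_(l in L) Al l ->
  (forall l, l \in L -> Al l \subset l) ->
  (nrect A <= 4 * #|L| * #|A| ^ 2)%N.
Proof.
move=> lines A_cover Al_on_line.
have Al_sub l : l \in L -> Al l \subset A by move=> lL; rewrite A_cover (bigcup_sup l lL).
have corners := card_corners_into_lines lines Al_on_line Al_sub.
rewrite -A_cover in corners.
have A_le_LA : (#|A| ^ 2 <= #|L| * #|A| ^ 2)%N.
  have [/eqP|L_gt0] := posnP #|L|; last by rewrite leq_pmull.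
  by rewrite cards_eq0 A_cover => /eqP ->; rewrite big_set0 cards0.
have := nrect_le_corners A; move: corners A_le_LA.
by set a := (#|A| ^ 2)%N; set b := (#|L| * a)%N; lia.
Qed.
End Anisotropic.
End PlaneGeometry.

Theorem lemma4p3 (R : realType) (C0 : R) :
  1 <= C0 ->
  exists K : R, 0 < K /\
    forall (F : finFieldType),
      (2%:R : F) != 0 ->
      (forall x : F, x * x != -1) ->
      forall (A : {set F * F}) (k : R),
        k_regular C0 A k ->
        (nrect A)%:R <= K * (#|A|%:R ^+ 2) * k.
Proof.
move=> C0_ge1; exists (4 * C0); split; first lra.
move=> F _ sqr_neq_m1 A k [_ [L [Al [lines [_ card_L] A_cover _ Al_props]]]].
have Al_on_line l : l \in L -> Al l \subset l by case/Al_props.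
have := nrect_le_lines sqr_neq_m1 lines A_cover Al_on_line.
rewrite -(ler_nat R) => /le_trans; apply; rewrite !natrM -expr2.
have -> : 4 * C0 * #|A|%:R ^+ 2 * k = 4 * (C0 * k) * #|A|%:R ^+ 2 by ring.
by rewrite ler_wpM2r ?sqr_ge0 // ler_wpM2l.
Qed.
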